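(* Let $\Sigma\cup\{x|y\}$ be a finite set of exclusion atoms. The problem of deciding whether $\Sigma\vdash x|y$ is decidable.
   Context: Letters $x,y,z,u,v,w,\dots$ denote finite tuples of variables; juxtaposition denotes concatenation. An exclusion atom is an expression $x|y$ with $|x|=|y|$. $\Sigma\vdash x|y$ means $x|y$ is derivable from $\Sigma$ using the rules (schemata over arbitrary tuples, atoms well-formed): (E1) $x|x\vdash y|z$; (E2) $x|y\vdash y|x$; (E3) $x|y\vdash xu|yv$; (E4) $xuu|yvv\vdash xu|yv$; (E5) $xyz|uvw\vdash xzy|uwv$ where $|x|=|u|$ and $|y|=|v|$; (E6) $xw|yw\vdash zz|xy$. *)

From Stdlib Require Import List Arith.
Import ListNotations.

Definition var := nat.
Definition tuple := list var.
Definition atom : Type := (tuple * tuple)%type.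

Definition wf_atom (a : atom) : Prop := length (fst a) = length (snd a).

(* derivable Sigma a  <->  Sigma |- a, using the rules (E1)-(E6), all atoms
   occurring in the rules being well formed. *)
Inductive derivable (Sigma : list atom) : atom -> Prop :=
| D_hyp : forall a, In a Sigma -> derivable Sigma a
| D_E1 : forall x y z, length y = length z ->
    derivable Sigma (x, x) -> derivable Sigma (y, z)
| D_E2 : forall x y, length x = length y ->
    derivable Sigma (x, y) -> derivable Sigma (y, x)
| D_E3 : forall x y u v, length x = length y -> length u = length v ->
    derivable Sigma (x, y) -> derivable Sigma (x ++ u, y ++ v)
| D_E4 : forall x y u v, length x = length y -> length u = length v ->
    derivable Sigma (x ++ u ++ u, y ++ v ++ v) -> derivable Sigma (x ++ u, y ++ v)
| D_E5 : forall x y z u v w,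
    length x = length u -> length y = length v -> length z = length w ->
    derivable Sigma (x ++ y ++ z, u ++ v ++ w) ->
    derivable Sigma (x ++ z ++ y, u ++ w ++ v)
| D_E6 : forall x y z w, length x = length y -> length z = length x ->
    derivable Sigma (x ++ w, y ++ w) -> derivable Sigma (z ++ z, x ++ y).

Inductive mu : Type :=
| MZero : mu
| MSucc : mu
| MProj : nat -> mu
| MComp : mu -> list mu -> mu
| MPrec : mu -> mu -> mu
| MMin  : mu -> mu.

Inductive eval : mu -> list nat -> nat -> Prop :=
| ev_zero : forall v, eval MZero v 0
| ev_succ : forall n v, eval MSucc (n :: v) (S n)
| ev_proj : forall i v, i < length v -> eval (MProj i) v (nth i v 0)
| ev_comp : forall f gs v ws r,
    evals gs v ws -> eval f ws r -> eval (MComp f gs) v r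
| ev_prec0 : forall f g v r, eval f v r -> eval (MPrec f g) (0 :: v) r
| ev_precS : forall f g n v r' r,
    eval (MPrec f g) (n :: v) r' -> eval g (n :: r' :: v) r ->
    eval (MPrec f g) (S n :: v) r
| ev_min : forall f v r,
    eval f (r :: v) 0 ->
    (forall k, k < r -> exists m, eval f (k :: v) (S m)) ->
    eval (MMin f) v r
with evals : list mu -> list nat -> list nat -> Prop :=
| evs_nil : forall v, evals [] v []
| evs_cons : forall g gs v w ws,
    eval g v w -> evals gs v ws -> evals (g :: gs) v (w :: ws).

Definition pair (a b : nat) : nat := (a + b) * (a + b + 1) / 2 + b.

Fixpoint code_list {A : Type} (c : A -> nat) (l : list A) : nat :=
  match l with
  | [] => 0
  | a :: l' => S (pair (c a) (code_list c l'))
  end.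

Definition code_tuple (x : tuple) : nat := code_list (fun n => n) x.
Definition code_atom (a : atom) : nat := pair (code_tuple (fst a)) (code_tuple (snd a)).
Definition code_instance (Sigma : list atom) (a : atom) : nat :=
  pair (code_list code_atom Sigma) (code_atom a).

Definition decidable_problem (P : list atom -> atom -> Prop) : Prop :=
  exists f : mu,
    (forall n, exists r, eval f [n] r) /\
    (forall Sigma a, Forall wf_atom Sigma -> wf_atom a ->
       (P Sigma a <-> eval f [code_instance Sigma a] 1)).

From Stdlib Require Import List Arith Lia Bool Permutation.
Import ListNotations.

(* An atom [x|y] matters to derivability only through its set of pairs {(x_k, y_k)}: (E3) adds
   pairs while (E4) and (E5) remove duplicates and permute, so derivability is closed under
   enlarging the pair set.  Up to this, (E2) takes the converse and (E6), with (E1) as its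
   degenerate case, passes from a set R to any set that contains, for each off-diagonal pair
   (i, j) of R, two pairs (z, i) and (z, j).  Collapsing every variable above a bound n on the
   variables of the instance onto 0 turns derivations into derivations of this shape, so
   Sigma |- x|y iff the pairs of x|y contain a member of the least family of relations on
   {0..n} that contains the pair sets of Sigma and is closed under supersets, converses and the
   (E6) step.  That family is a least fixed point in the finite set of relations on {0..n},
   reached after as many steps as there are relations; coding relations as bit masks and taking
   for n the Cantor code of the instance, it is computed by a primitive recursive expression,
   which compiles to a total mu-recursive term. *)

(** * Primitive recursive expressions *)

Inductive exp : Type :=
| EVar : nat -> exp
| EZero : exp
| ESucc : exp -> exp
| ERec : exp -> exp -> exp -> exp.

Fixpoint prim_rec (i : nat) (s : nat -> nat -> nat) (m : nat) : nat :=
  match m with 0 => i | S k => s k (prim_rec i s k) end.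

(* Variables are de Bruijn indices; [ERec b i s] runs [b] steps of [s] from [i],
   the step seeing the counter and the previous value as variables 0 and 1. *)
Fixpoint denote (env : list nat) (e : exp) : nat :=
  match e with
  | EVar i => nth i env 0
  | EZero => 0
  | ESucc e => S (denote env e)
  | ERec b i s =>
      prim_rec (denote env i) (fun k r => denote (k :: r :: env) s) (denote env b)
  end.

Definition projs (L : nat) : list mu := map MProj (seq 0 L).

(* Out-of-range variables denote [0], the default of [nth]. *)
Fixpoint compile (L : nat) (e : exp) : mu :=
  match e with
  | EVar i => if i <? L then MProj i else MZero
  | EZero => MZero
  | ESucc e => MComp MSucc [compile L e]
  | ERec b i s =>
      MComp (MPrec (compile L i) (compile (S (S L)) s)) (compile L b :: projs L)
  end.

Lemma skipn_nth {A} k (l : list A) d :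
  k < length l -> skipn k l = nth k l d :: skipn (S k) l.
Proof. revert l; induction k; intros [|a l] Hk; simpl in *; try lia; auto with arith. Qed.

Lemma evals_projs_from env m : forall k ws, k + m = length env ->
  evals (map MProj (seq k m)) env ws <-> ws = skipn k env.
Proof.
  induction m as [|m IH]; intros k ws Hk; simpl.
  - rewrite skipn_all2 by lia.
    split; intros H; [inversion H | subst; constructor]; auto.
  - rewrite (skipn_nth k env 0) by lia. split.
    + intros H; inversion H as [|g gs v w ws' Hg Hgs]; subst.
      inversion Hg; subst. f_equal. apply IH; auto; lia.
    + intros ->. constructor; [constructor; lia | apply IH; auto; lia].
Qed.

Lemma evals_projs env ws : evals (projs (length env)) env ws <-> ws = env.
Proof. apply (evals_projs_from env (length env) 0); reflexivity. Qed.

Lemma eval_compile e : forall env, eval (compile (length env) e) env (denote env e).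
Proof.
  induction e as [i| |e IH|b IHb i IHi s IHs]; intros env; simpl.
  - destruct (Nat.ltb_spec i (length env)).
    + now constructor.
    + rewrite nth_overflow by lia. constructor.
  - constructor.
  - econstructor; [constructor; [apply IH | constructor] | constructor].
  - econstructor; [constructor; [apply IHb | now apply evals_projs] |].
    generalize (denote env b) as m; induction m as [|m IHm]; simpl.
    + constructor. apply IHi.
    + econstructor; [apply IHm | apply (IHs (_ :: _ :: env))].
Qed.

Lemma eval_compile_inv e : forall env r, eval (compile (length env) e) env r -> r = denote env e.
Proof.
  induction e as [i| |e IH|b IHb i IHi s IHs]; intros env r H; simpl in *.
  - destruct (Nat.ltb_spec i (length env)); inversion H; subst; auto.
    now rewrite nth_overflow by lia.
  - now inversion H.
  - inversion H as [| | |f gs v ws r' Hws Hf| | |]; subst.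
    inversion Hws as [|g gs' v' w ws' Hg Hgs]; subst. inversion Hgs; subst.
    inversion Hf; subst. f_equal. now apply IH.
  - inversion H as [| | |f gs v ws r' Hws Hf| | |]; subst.
    inversion Hws as [|g gs' v' w ws' Hg Hgs]; subst.
    apply IHb in Hg; apply evals_projs in Hgs; subst.
    clear H. revert r Hf. generalize (denote env b) as m.
    induction m as [|m IHm]; intros r Hf; simpl.
    + inversion Hf; subst. now apply IHi.
    + inversion Hf as [| | | | |f g k v r' r'' Hp Hg|]; subst.
      apply IHm in Hp; subst. now apply (IHs (m :: _ :: env)).
Qed.

Fixpoint lift (c n : nat) (e : exp) : exp :=
  match e with
  | EVar i => if i <? c then EVar i else EVar (i + n)
  | EZero => EZero
  | ESucc e => ESucc (lift c n e)
  | ERec b i s => ERec (lift c n b) (lift c n i) (lift (S (S c)) n s)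
  end.

Lemma denote_lift e : forall env1 ins env2,
  denote (env1 ++ ins ++ env2) (lift (length env1) (length ins) e) = denote (env1 ++ env2) e.
Proof.
  induction e as [i| |e IH|b IHb i IHi s IHs]; intros env1 ins env2; simpl.
  - destruct (Nat.ltb_spec i (length env1)); simpl.
    + now rewrite !app_nth1 by lia.
    + rewrite !app_nth2 by (rewrite ?length_app; lia). f_equal. lia.
  - reflexivity.
  - now rewrite IH.
  - rewrite IHb, IHi. generalize (denote (env1 ++ env2) b) as m.
    induction m as [|m IHm]; simpl; auto.
    rewrite IHm. apply (IHs (m :: _ :: env1)).
Qed.

Definition shift (n : nat) (e : exp) : exp := lift 0 n e.

Lemma denote_shift pre env e x : denote env e = x -> denote (pre ++ env) (shift (length pre) e) = x.
Proof. intros <-. apply (denote_lift e []). Qed.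

(** * Bounded iteration and arithmetic *)

Fixpoint bsum (K : nat) (f : nat -> nat) : nat :=
  match K with 0 => 0 | S K => bsum K f + f K end.
Fixpoint bex (K : nat) (f : nat -> bool) : bool :=
  match K with 0 => false | S K => bex K f || f K end.
Fixpoint ball (K : nat) (f : nat -> bool) : bool :=
  match K with 0 => true | S K => ball K f && f K end.

Lemma bsum_ext K f g : (forall k, k < K -> f k = g k) -> bsum K f = bsum K g.
Proof. induction K; simpl; intros H; auto. rewrite IHK, H; auto. Qed.

Lemma bsum_zero K f : (forall k, k < K -> f k = 0) -> bsum K f = 0.
Proof. induction K; simpl; intros H; auto. rewrite IHK, H; auto. Qed.

Lemma bsum_single K f k0 :
  k0 < K -> (forall k, k < K -> k <> k0 -> f k = 0) -> bsum K f = f k0.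
Proof.
  induction K; simpl; intros Hk0 H; [lia|].
  destruct (Nat.eq_dec k0 K) as [->|].
  - rewrite bsum_zero; auto. intros k Hk; apply H; lia.
  - rewrite IHK, (H K); auto; lia.
Qed.

Lemma bex_iff K f : bex K f = true <-> exists k, k < K /\ f k = true.
Proof.
  induction K; simpl.
  - split; [discriminate | intros [k [Hk _]]; lia].
  - rewrite orb_true_iff, IHK. split.
    + intros [[k [Hk Hf]] | Hf]; [exists k | exists K]; auto.
    + intros [k [Hk Hf]]. destruct (Nat.eq_dec k K) as [->|]; auto.
      left; exists k; split; auto; lia.
Qed.

Lemma ball_iff K f : ball K f = true <-> forall k, k < K -> f k = true.
Proof.
  induction K; simpl.
  - split; auto; intros; lia.
  - rewrite andb_true_iff, IHK. split.
    + intros [H1 H2] k Hk. destruct (Nat.eq_dec k K) as [->|]; auto. apply H1; lia.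
    + intros H; split; auto.
Qed.

Lemma bex_ext K f g : (forall k, k < K -> f k = g k) -> bex K f = bex K g.
Proof. induction K; simpl; intros H; auto. rewrite IHK, H; auto. Qed.

Lemma ball_false K f : ball K f = false -> exists k, k < K /\ f k = false.
Proof.
  induction K as [|K IH]; simpl; [discriminate|]. rewrite andb_false_iff.
  intros [H | H]; [destruct (IH H) as [k [Hk Hf]]; exists k | exists K]; split; auto; lia.
Qed.

Lemma bsum_lt_strict K f g : (forall k, k < K -> f k <= g k) ->
  (exists k, k < K /\ f k < g k) -> bsum K f < bsum K g.
Proof.
  induction K as [|K IH]; intros Hle [k [Hk Hlt]]; [lia|]. cbn [bsum].
  assert (Hsum : bsum K f <= bsum K g).
  { clear - Hle. induction K; cbn [bsum]; auto.
    pose proof (Hle K ltac:(lia)). enough (bsum K f <= bsum K g) by lia.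
    apply IHK. intros; apply Hle; lia. }
  pose proof (Hle K ltac:(lia)).
  destruct (Nat.eq_dec k K) as [->|]; [lia|].
  enough (bsum K f < bsum K g) by lia.
  apply IH; [intros; apply Hle; lia | exists k; split; auto; lia].
Qed.

Lemma leb_1_bsum K f : (1 <=? bsum K (fun k => Nat.b2n (f k))) = bex K f.
Proof.
  induction K as [|K IH]; simpl; auto. rewrite <- IH.
  destruct (f K); simpl.
  - rewrite Nat.add_1_r, orb_true_r. now destruct bsum.
  - now rewrite Nat.add_0_r, orb_false_r.
Qed.

Fixpoint ENum (c : nat) : exp := match c with 0 => EZero | S c => ESucc (ENum c) end.
Definition EAdd a b := ERec a b (ESucc (EVar 1)).
Definition EPred a := ERec a EZero (EVar 0).
Definition ESub a b := ERec b a (EPred (EVar 1)).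
Definition EMul a b := ERec a EZero (EAdd (EVar 1) (shift 2 b)).
Definition EIter cnt init stp := ERec cnt init (lift 0 1 stp).
Definition ESum bnd body := ERec bnd EZero (EAdd (EVar 1) (lift 1 1 body)).
Definition ELe a b := ESub (ENum 1) (ESub a b).
Definition ENot a := ESub (ENum 1) a.
Definition EAnd a b := EMul a b.
Definition EOr a b := ELe (ENum 1) (EAdd a b).
Definition EImp a b := EOr (ENot a) b.
Definition EEq a b := EAnd (ELe a b) (ELe b a).
Definition EEx bnd body := ELe (ENum 1) (ESum bnd body).
Definition EAll bnd body := ENot (EEx bnd (ENot body)).
Definition EPow2 a := EIter a (ENum 1) (EAdd (EVar 0) (EVar 0)).
Definition EDiv x d := ESum x (ELe (EMul (ESucc (EVar 0)) (shift 1 d)) (shift 1 x)).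
Definition EMod2 y := ESub y (EMul (ENum 2) (EDiv y (ENum 2))).
Definition EBit x i := EMod2 (EDiv x (EPow2 i)).
Definition EPair a b := EAdd (EDiv (EMul (EAdd a b) (ESucc (EAdd a b))) (ENum 2)) b.

Lemma denote_ENum env c : denote env (ENum c) = c.
Proof. induction c; simpl; auto. Qed.

Lemma denote_ESucc env a x : denote env a = x -> denote env (ESucc a) = S x.
Proof. simpl; auto. Qed.

Lemma denote_EAdd env a b x y :
  denote env a = x -> denote env b = y -> denote env (EAdd a b) = x + y.
Proof. intros <- <-. simpl. induction (denote env a); simpl; auto. Qed.

Lemma denote_EPred env a x : denote env a = x -> denote env (EPred a) = pred x.
Proof. intros <-. simpl. now destruct (denote env a). Qed.

Lemma denote_ESub env a b x y :
  denote env a = x -> denote env b = y -> denote env (ESub a b) = x - y.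
Proof.
  intros <- <-. simpl. induction (denote env b) as [|m IH]; simpl; [lia|].
  rewrite IH. destruct (denote env a - m) eqn:E; simpl; lia.
Qed.

Lemma denote_EMul env a b x y :
  denote env a = x -> denote env b = y -> denote env (EMul a b) = x * y.
Proof.
  intros <- Hb. unfold EMul; cbn [denote].
  induction (denote env a) as [|m IH]; cbn [prim_rec]; auto.
  erewrite denote_EAdd; [| reflexivity | apply (denote_shift [m; _] env); exact Hb].
  rewrite IH. cbn [denote nth]. lia.
Qed.

Lemma denote_EIter env cnt init stp C I (f : nat -> nat) :
  denote env cnt = C -> denote env init = I -> (forall r, denote (r :: env) stp = f r) ->
  denote env (EIter cnt init stp) = Nat.iter C f I.
Proof.
  intros <- <- Hf. simpl. induction (denote env cnt) as [|m IH]; simpl; auto.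
  rewrite <- Hf, <- IH. apply (denote_lift stp [] [m]).
Qed.

Lemma denote_ESum env bnd body B f :
  denote env bnd = B -> (forall k, denote (k :: env) body = f k) ->
  denote env (ESum bnd body) = bsum B f.
Proof.
  intros <- Hf. unfold ESum; cbn [denote].
  induction (denote env bnd) as [|m IH]; cbn [prim_rec]; auto.
  erewrite denote_EAdd; [| reflexivity | apply (denote_lift body [m] [_] env)].
  rewrite IH. cbn [denote nth app bsum]. now rewrite Hf.
Qed.

Lemma denote_ELe env a b x y : denote env a = x -> denote env b = y ->
  denote env (ELe a b) = Nat.b2n (x <=? y).
Proof.
  intros Ha Hb. unfold ELe. erewrite denote_ESub; [| apply denote_ENum | apply denote_ESub; eauto].
  destruct (Nat.leb_spec x y); cbn [Nat.b2n]; lia.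
Qed.

Lemma denote_ENot env a p : denote env a = Nat.b2n p -> denote env (ENot a) = Nat.b2n (negb p).
Proof.
  intros Ha. unfold ENot. erewrite denote_ESub; [| apply denote_ENum | eauto].
  now destruct p.
Qed.

Lemma denote_EAnd env a b p q : denote env a = Nat.b2n p -> denote env b = Nat.b2n q ->
  denote env (EAnd a b) = Nat.b2n (p && q).
Proof. intros Ha Hb. unfold EAnd. erewrite denote_EMul; eauto. now destruct p, q. Qed.

Lemma denote_EOr env a b p q : denote env a = Nat.b2n p -> denote env b = Nat.b2n q ->
  denote env (EOr a b) = Nat.b2n (p || q).
Proof.
  intros Ha Hb. unfold EOr. erewrite denote_ELe; [| apply denote_ENum | apply denote_EAdd; eauto].
  now destruct p, q.
Qed.

Lemma denote_EImp env a b p q : denote env a = Nat.b2n p -> denote env b = Nat.b2n q ->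
  denote env (EImp a b) = Nat.b2n (implb p q).
Proof.
  intros Ha Hb. unfold EImp. erewrite denote_EOr; [| apply denote_ENot; eauto | eauto].
  now destruct p, q.
Qed.

Lemma denote_EEq env a b x y : denote env a = x -> denote env b = y ->
  denote env (EEq a b) = Nat.b2n (x =? y).
Proof.
  intros Ha Hb. unfold EEq.
  erewrite denote_EAnd; [| apply denote_ELe; eauto | apply denote_ELe; eauto].
  f_equal. destruct (Nat.leb_spec x y), (Nat.leb_spec y x), (Nat.eqb_spec x y); simpl; auto; lia.
Qed.

Lemma denote_EEx env bnd body B f : denote env bnd = B ->
  (forall k, denote (k :: env) body = Nat.b2n (f k)) ->
  denote env (EEx bnd body) = Nat.b2n (bex B f).
Proof.
  intros Hb Hf. unfold EEx. erewrite denote_ELe;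
    [| apply denote_ENum | apply denote_ESum with (f := fun k => Nat.b2n (f k)); auto].
  now rewrite leb_1_bsum, Hb.
Qed.

Lemma denote_EAll env bnd body B f : denote env bnd = B ->
  (forall k, denote (k :: env) body = Nat.b2n (f k)) ->
  denote env (EAll bnd body) = Nat.b2n (ball B f).
Proof.
  intros Hb Hf. unfold EAll. erewrite denote_ENot.
  2: { apply (denote_EEx env bnd _ B (fun k => negb (f k))); auto.
       intros k. now apply denote_ENot. }
  f_equal. clear. induction B; simpl; auto.
  now rewrite negb_orb, IHB, negb_involutive.
Qed.

Lemma denote_EPow2 env a x : denote env a = x -> denote env (EPow2 a) = 2 ^ x.
Proof.
  intros Ha. unfold EPow2. rewrite (denote_EIter env a _ _ x 1 (fun r => r + r));
    [| auto | apply denote_ENum | intros r; now apply denote_EAdd].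
  clear Ha. induction x; simpl; auto. rewrite IHx. lia.
Qed.

Lemma bsum_lt K q : bsum K (fun k => Nat.b2n (k <? q)) = Nat.min K q.
Proof.
  induction K; cbn [bsum]; auto.
  rewrite IHK. destruct (Nat.ltb_spec K q); cbn [Nat.b2n]; lia.
Qed.

(* [x / d] is the number of [k < x] with [(k + 1) * d <= x]. *)
Lemma denote_EDiv env x d X D : denote env x = X -> denote env d = D -> 0 < D ->
  denote env (EDiv x d) = X / D.
Proof.
  intros Hx Hd HD. unfold EDiv.
  rewrite (denote_ESum env x _ X (fun k => Nat.b2n (S k * D <=? X))); auto.
  - rewrite (bsum_ext X _ (fun k => Nat.b2n (k <? X / D))), bsum_lt.
    + enough (X / D <= X) by lia. apply Nat.Div0.div_le_upper_bound. nia.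
    + intros k _. f_equal. apply eq_true_iff_eq.
      rewrite Nat.leb_le, Nat.ltb_lt, <- Nat.le_succ_l. split; intros H.
      * apply Nat.div_le_lower_bound; lia.
      * pose proof (Nat.Div0.mul_div_le X D). nia.
  - intros k. apply denote_ELe.
    + apply denote_EMul; [reflexivity | now apply (denote_shift [k])].
    + now apply (denote_shift [k]).
Qed.

Lemma denote_EMod2 env y Y : denote env y = Y -> denote env (EMod2 y) = Y mod 2.
Proof.
  intros Hy. unfold EMod2. rewrite (denote_ESub env _ _ Y (2 * (Y / 2))); auto.
  - pose proof (Nat.div_mod_eq Y 2). lia.
  - apply denote_EMul; [apply denote_ENum | apply denote_EDiv; auto; apply denote_ENum].
Qed.

Lemma denote_EBit env x i X I : denote env x = X -> denote env i = I ->
  denote env (EBit x i) = Nat.b2n (Nat.testbit X I).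
Proof.
  intros Hx Hi. rewrite Nat.testbit_spec'. apply denote_EMod2, denote_EDiv; auto.
  - now apply denote_EPow2.
  - apply Nat.neq_0_lt_0, Nat.pow_nonzero. discriminate.
Qed.

Lemma denote_EPair env a b x y : denote env a = x -> denote env b = y ->
  denote env (EPair a b) = pair x y.
Proof.
  intros Ha Hb. unfold EPair, pair. apply denote_EAdd; auto. rewrite Nat.add_1_r.
  apply denote_EDiv; [| apply denote_ENum | lia].
  apply denote_EMul; [| apply denote_ESucc]; now apply denote_EAdd.
Qed.

(* Each combinator registers its denotation lemma here, so that [denote_solve] proves the
   denotation of a compound expression by following its syntax. *)
Create HintDb denote discriminated.
#[export] Hint Extern 1 (denote _ (EVar _) = _) => reflexivity : denote.
#[export] Hint Extern 1 (denote ?env (shift ?n _) = _) =>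
  apply (denote_shift (firstn n env) (skipn n env)) : denote.
#[export] Hint Extern 1 (denote _ EZero = _) => reflexivity : denote.
#[export] Hint Extern 1 (denote _ (ENum _) = _) => apply denote_ENum : denote.
#[export] Hint Extern 1 (denote _ (ESucc _) = _) => apply denote_ESucc : denote.
#[export] Hint Extern 1 (denote _ (EPred _) = _) => apply denote_EPred : denote.
#[export] Hint Extern 1 (denote _ (EMul _ _) = _) => apply denote_EMul : denote.
#[export] Hint Extern 1 (denote _ (ESum _ _) = _) => apply denote_ESum : denote.
#[export] Hint Extern 1 (denote _ (EIter _ _ _) = _) => apply denote_EIter : denote.
#[export] Hint Extern 1 (denote _ (ENot _) = _) => apply denote_ENot : denote.
#[export] Hint Extern 1 (denote _ (EAnd _ _) = _) => apply denote_EAnd : denote.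
#[export] Hint Extern 1 (denote _ (EOr _ _) = _) => apply denote_EOr : denote.
#[export] Hint Extern 1 (denote _ (EImp _ _) = _) => apply denote_EImp : denote.
#[export] Hint Extern 1 (denote _ (EEq _ _) = _) => apply denote_EEq : denote.
#[export] Hint Extern 1 (denote _ (EEx _ _) = _) => apply denote_EEx : denote.
#[export] Hint Extern 1 (denote _ (EAll _ _) = _) => apply denote_EAll : denote.
#[export] Hint Extern 1 (denote _ (EPow2 _) = _) => apply denote_EPow2 : denote.
#[export] Hint Extern 1 (denote _ (EBit _ _) = _) => apply denote_EBit : denote.
#[export] Hint Extern 1 (denote _ (EPair _ _) = _) => apply denote_EPair : denote.

Ltac denote_solve := solve [auto 200 with denote nocore].

(** * Cantor pairing, bit masks and codes of lists *)

Definition tri (s : nat) : nat := s * (s + 1) / 2.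

Lemma tri_S s : tri (S s) = tri s + S s.
Proof.
  unfold tri. replace (S s * (S s + 1)) with (s * (s + 1) + S s * 2) by lia.
  now rewrite Nat.div_add.
Qed.

Lemma tri_lt s s' : s < s' -> tri s + s < tri s'.
Proof. induction 1; rewrite tri_S; lia. Qed.

Lemma tri_le s s' : s <= s' -> tri s <= tri s'.
Proof. induction 1; [| rewrite tri_S]; lia. Qed.

Lemma pair_tri a b : pair a b = tri (a + b) + b.
Proof. reflexivity. Qed.

Lemma pair_inj a b a' b' : pair a b = pair a' b' -> a = a' /\ b = b'.
Proof.
  rewrite !pair_tri. intros H.
  destruct (Nat.lt_trichotomy (a + b) (a' + b')) as [Hl | [He | Hl]].
  - pose proof (tri_lt _ _ Hl). lia.
  - rewrite He in H. lia.
  - pose proof (tri_lt _ _ Hl). lia.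
Qed.

Lemma pair_ge a b : a + b <= pair a b.
Proof.
  rewrite pair_tri. enough (a + b <= tri (a + b)) by lia.
  induction (a + b) as [|s IH]; auto. rewrite tri_S. lia.
Qed.

Lemma pair_mono a b a' b' : a <= a' -> b <= b' -> pair a b <= pair a' b'.
Proof. intros. rewrite !pair_tri. pose proof (tri_le (a + b) (a' + b')). lia. Qed.

(* Inverting [pair] by exhaustive search: both components of [c] are at most [c]. *)
Definition unpair_l (c : nat) : nat :=
  bsum (S c) (fun a => a * bsum (S c) (fun b => Nat.b2n (pair a b =? c))).
Definition unpair_r (c : nat) : nat :=
  bsum (S c) (fun a => bsum (S c) (fun b => b * Nat.b2n (pair a b =? c))).

Lemma unpair_l_pair a b : unpair_l (pair a b) = a.
Proof.
  unfold unpair_l. pose proof (pair_ge a b).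
  rewrite (bsum_single _ _ a), (bsum_single _ _ b), Nat.eqb_refl; cbn [Nat.b2n]; try lia.
  - intros k _ Hk. destruct (Nat.eqb_spec (pair a k) (pair a b)) as [E|]; auto.
    apply pair_inj in E. lia.
  - intros k _ Hk. rewrite bsum_zero; [lia|]. intros k' _.
    destruct (Nat.eqb_spec (pair k k') (pair a b)) as [E|]; auto.
    apply pair_inj in E. lia.
Qed.

Lemma unpair_r_pair a b : unpair_r (pair a b) = b.
Proof.
  unfold unpair_r. pose proof (pair_ge a b).
  rewrite (bsum_single _ _ a), (bsum_single _ _ b), Nat.eqb_refl; cbn [Nat.b2n]; try lia.
  - intros k _ Hk. destruct (Nat.eqb_spec (pair a k) (pair a b)) as [E|]; simpl; [|lia].
    apply pair_inj in E. lia.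
  - intros k _ Hk. apply bsum_zero. intros k' _.
    destruct (Nat.eqb_spec (pair k k') (pair a b)) as [E|]; simpl; [|lia].
    apply pair_inj in E. lia.
Qed.

Definition EUnpairL c :=
  ESum (ESucc c)
    (EMul (EVar 0) (ESum (ESucc (shift 1 c)) (EEq (EPair (EVar 1) (EVar 0)) (shift 2 c)))).
Definition EUnpairR c :=
  ESum (ESucc c)
    (ESum (ESucc (shift 1 c)) (EMul (EVar 0) (EEq (EPair (EVar 1) (EVar 0)) (shift 2 c)))).

Lemma denote_EUnpairL env c C : denote env c = C -> denote env (EUnpairL c) = unpair_l C.
Proof. intros. unfold EUnpairL, unpair_l. denote_solve. Qed.
#[export] Hint Extern 1 (denote _ (EUnpairL _) = _) => apply denote_EUnpairL : denote.

Lemma denote_EUnpairR env c C : denote env c = C -> denote env (EUnpairR c) = unpair_r C.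
Proof. intros. unfold EUnpairR, unpair_r. denote_solve. Qed.
#[export] Hint Extern 1 (denote _ (EUnpairR _) = _) => apply denote_EUnpairR : denote.

Definition msum (K : nat) (c : nat -> bool) : nat := bsum K (fun t => 2 ^ t * Nat.b2n (c t)).

Lemma msum_lt K c : msum K c < 2 ^ K.
Proof.
  induction K; unfold msum in *; cbn [bsum]; [simpl; lia|].
  rewrite Nat.pow_succ_r'. destruct (c K); simpl Nat.b2n; lia.
Qed.

Lemma testbit_msum K c t : t < K -> Nat.testbit (msum K c) t = c t.
Proof.
  induction K; intros Ht; [lia|].
  assert (E : msum (S K) c = msum K c + (Nat.b2n (c K) + 2 * 0) * 2 ^ K)
    by (unfold msum; cbn [bsum]; lia).
  destruct (Nat.eq_dec t K) as [->|].
  - rewrite E. apply Nat.testbit_unique with (msum K c) 0; auto using msum_lt.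
  - rewrite <- (Nat.mod_pow2_bits_low _ K) by lia.
    rewrite E, Nat.Div0.mod_add, Nat.mod_small by apply msum_lt. apply IHK; lia.
Qed.

(* A relation on [{0..n}] is coded by the mask with bit [pair i j] set for each of its pairs. *)
Definition rel_size (n : nat) : nat := S (pair n n).
Definition rel_count (n : nat) : nat := 2 ^ rel_size n.
Definition rel_mem (T i j : nat) : bool := Nat.testbit T (pair i j).
Definition rel_mask (n : nat) (Q : nat -> nat -> bool) : nat :=
  msum (rel_size n) (fun p => Q (unpair_l p) (unpair_r p)).

Lemma rel_mask_lt n Q : rel_mask n Q < rel_count n.
Proof. apply msum_lt. Qed.

Lemma rel_mem_mask n Q i j : i <= n -> j <= n -> rel_mem (rel_mask n Q) i j = Q i j.
Proof.
  intros Hi Hj. unfold rel_mem, rel_mask.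
  rewrite testbit_msum, unpair_l_pair, unpair_r_pair; auto.
  unfold rel_size. pose proof (pair_mono i j n n Hi Hj). lia.
Qed.

Lemma rel_mem_0 i j : rel_mem 0 i j = false.
Proof. apply Nat.bits_0. Qed.

Definition bforall2 (n : nat) (P : nat -> nat -> bool) : bool :=
  ball (S n) (fun i => ball (S n) (fun j => P i j)).

Lemma bforall2_iff n P : bforall2 n P = true <-> forall i j, i <= n -> j <= n -> P i j = true.
Proof.
  unfold bforall2. rewrite ball_iff. setoid_rewrite ball_iff. split.
  - intros H i j Hi Hj. apply H; lia.
  - intros H i Hi j Hj. apply H; lia.
Qed.

Definition code_tl (c : nat) : nat := unpair_r (pred c).
Definition code_drop (k c : nat) : nat := Nat.iter k code_tl c.
Definition code_at (c k : nat) : nat := unpair_l (pred (code_drop k c)).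
Definition code_has (c k : nat) : bool := negb (code_drop k c =? 0).

Lemma code_tl_0 : code_tl 0 = 0.
Proof. exact (unpair_r_pair 0 0). Qed.

Section ListCodes.
Context {A : Type} (f : A -> nat).

Lemma code_tl_cons a l : code_tl (code_list f (a :: l)) = code_list f l.
Proof. apply unpair_r_pair. Qed.

Lemma code_drop_list k l : code_drop k (code_list f l) = code_list f (skipn k l).
Proof.
  unfold code_drop. revert l; induction k as [|k IH]; intros l; auto.
  rewrite Nat.iter_succ_r. destruct l as [|a l].
  - rewrite skipn_nil. cbn [code_list]. rewrite code_tl_0.
    specialize (IH []). now rewrite skipn_nil in IH.
  - rewrite code_tl_cons. apply IH.
Qed.

Lemma code_has_list k l : code_has (code_list f l) k = (k <? length l).
Proof.
  unfold code_has. rewrite code_drop_list.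
  pose proof (length_skipn k l) as Hlen.
  destruct (skipn k l); simpl in *; destruct (Nat.ltb_spec k (length l)); auto; lia.
Qed.

Lemma code_at_list d k l : k < length l -> code_at (code_list f l) k = f (nth k l d).
Proof.
  intros Hk. unfold code_at. rewrite code_drop_list, (skipn_nth k l d) by auto.
  apply unpair_l_pair.
Qed.

Lemma length_le_code_list l : length l <= code_list f l.
Proof. induction l as [|a l IH]; simpl; auto. pose proof (pair_ge (f a) (code_list f l)). lia. Qed.

Lemma In_le_code_list l a : In a l -> f a <= code_list f l.
Proof.
  induction l as [|b l IH]; simpl; [tauto|].
  pose proof (pair_ge (f b) (code_list f l)). intros [->|Hin]; [|apply IH in Hin]; lia.
Qed.

End ListCodes.

Definition atom_pairs (a : atom) : list (var * var) := combine (fst a) (snd a).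

Lemma In_combine_nth (x y : list nat) i j : length x = length y ->
  In (i, j) (combine x y) <-> exists k, k < length x /\ nth k x 0 = i /\ nth k y 0 = j.
Proof.
  intros Hxy. split.
  - intros Hin. apply (In_nth _ _ (0, 0)) in Hin as [k [Hk He]].
    rewrite length_combine in Hk. rewrite combine_nth in He by auto.
    injection He as <- <-. exists k. split; auto; lia.
  - intros [k [Hk [<- <-]]]. rewrite <- combine_nth by auto.
    apply nth_In. rewrite length_combine. lia.
Qed.

Definition code_has_pair (C i j : nat) : bool :=
  bex C (fun k => code_has (unpair_l C) k && (code_at (unpair_l C) k =? i)
                  && (code_at (unpair_r C) k =? j)).

Lemma code_has_pair_iff a i j :
  wf_atom a -> code_has_pair (code_atom a) i j = true <-> In (i, j) (atom_pairs a).
Proof.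
  destruct a as [x y]. unfold wf_atom, atom_pairs, code_has_pair, code_atom, code_tuple; simpl.
  unfold tuple, var in *. intros Hxy.
  rewrite unpair_l_pair, unpair_r_pair, bex_iff, In_combine_nth by auto.
  split.
  - intros [k [_ Hk]]. rewrite !andb_true_iff, !Nat.eqb_eq, code_has_list, Nat.ltb_lt in Hk.
    destruct Hk as [[Hk Hi] Hj]. exists k.
    rewrite (code_at_list _ 0) in Hi, Hj by lia. auto.
  - intros [k [Hk [Hi Hj]]]. exists k. split.
    + pose proof (length_le_code_list (fun n => n) x).
      pose proof (pair_ge (code_list (fun n => n) x) (code_list (fun n => n) y)). lia.
    + rewrite code_has_list, (code_at_list _ 0 k x), (code_at_list _ 0 k y), Hi, Hj,
        !Nat.eqb_refl by lia.
      now apply Nat.ltb_lt in Hk as ->.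
Qed.

(** * Derivability depends only on the set of pairs *)

Definition atom_of (L : list (var * var)) : atom := (map fst L, map snd L).

Lemma atom_pairs_atom_of L : atom_pairs (atom_of L) = L.
Proof.
  unfold atom_pairs, atom_of; simpl.
  induction L as [|[a b] L IH]; simpl; auto. now rewrite IH.
Qed.

Lemma atom_of_atom_pairs d : wf_atom d -> atom_of (atom_pairs d) = d.
Proof.
  destruct d as [x y]. unfold wf_atom, atom_of, atom_pairs; simpl. revert y.
  induction x as [|a x IH]; intros [|b y] H; simpl in *; try discriminate; auto.
  injection (IH y ltac:(auto)) as -> ->. reflexivity.
Qed.

Lemma wf_atom_of L : wf_atom (atom_of L).
Proof. unfold wf_atom, atom_of; simpl. now rewrite !length_map. Qed.

Definition vars_le (n : nat) (a : atom) : Prop := forall v, In v (fst a ++ snd a) -> v <= n.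

Lemma vars_le_atom_pairs n a i j : vars_le n a -> In (i, j) (atom_pairs a) -> i <= n /\ j <= n.
Proof.
  intros Ha Hij. split; apply Ha, in_or_app;
    [left; eapply in_combine_l | right; eapply in_combine_r]; eauto.
Qed.

Lemma combine_app (x u y v : list nat) : length x = length y ->
  combine (x ++ u) (y ++ v) = combine x y ++ combine u v.
Proof.
  revert y; induction x; intros [|b y] H; simpl in *; try lia; auto.
  now rewrite IHx by lia.
Qed.

Lemma combine_map (f g : nat -> nat) (x y : list nat) :
  combine (map f x) (map g y) = map (fun p => (f (fst p), g (snd p))) (combine x y).
Proof. revert y; induction x; intros [|b y]; simpl; auto. now rewrite IHx. Qed.

Lemma atom_pairs_app x u y v : length x = length y ->
  atom_pairs (x ++ u, y ++ v) = atom_pairs (x, y) ++ atom_pairs (u, v).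
Proof. apply combine_app. Qed.

Lemma In_combine_swap (x y : list nat) i j : In (i, j) (combine x y) -> In (j, i) (combine y x).
Proof.
  revert y; induction x; intros [|b y] H; simpl in *; auto.
  destruct H as [[= -> ->] | H]; auto.
Qed.

Lemma In_combine_diag (x : list nat) i j : In (i, j) (combine x x) -> i = j.
Proof. induction x; simpl; [tauto|]. intros [[= <- <-] | H]; auto. Qed.

Lemma vars_le_code_atom a : vars_le (code_atom a) a.
Proof.
  destruct a as [x y]. intros v Hv. unfold code_atom, code_tuple; simpl in *.
  pose proof (pair_ge (code_list (fun v => v) x) (code_list (fun v => v) y)).
  apply in_app_iff in Hv as [Hv | Hv]; apply (In_le_code_list (fun v => v)) in Hv; lia.
Qed.

Lemma vars_le_mono n m a : n <= m -> vars_le n a -> vars_le m a.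
Proof. intros Hnm Ha v Hv. specialize (Ha v Hv). lia. Qed.

Definition clamp (n v : nat) : nat := if v <=? n then v else 0.
Definition collapse (n : nat) (d : atom) : atom := (map (clamp n) (fst d), map (clamp n) (snd d)).

Lemma clamp_le n v : clamp n v <= n.
Proof. unfold clamp. destruct (Nat.leb_spec v n); lia. Qed.

Lemma collapse_id n d : vars_le n d -> collapse n d = d.
Proof.
  destruct d as [x y]. unfold vars_le, collapse, clamp; simpl. intros H.
  f_equal; rewrite <- map_id; apply map_ext_in; intros v Hv;
    (destruct (Nat.leb_spec v n); [reflexivity|]);
    enough (v <= n) by lia; apply H, in_or_app; auto.
Qed.

Lemma atom_pairs_collapse n d :
  atom_pairs (collapse n d) = map (fun p => (clamp n (fst p), clamp n (snd p))) (atom_pairs d).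
Proof. apply combine_map. Qed.

Lemma wf_collapse n d : wf_atom d -> wf_atom (collapse n d).
Proof. unfold wf_atom, collapse; simpl. now rewrite !length_map. Qed.

Lemma In_combine_common (x y z : list nat) i j : length z = length x -> length x = length y ->
  In (i, j) (combine x y) -> exists c, In c z /\ In (c, i) (combine z x) /\ In (c, j) (combine z y).
Proof.
  revert y z; induction x as [|a x IH]; intros [|b y] [|c z] Hzx Hxy H; simpl in *;
    try lia; try contradiction.
  destruct H as [[= -> ->] | H]; [exists c; auto|].
  destruct (IH y z) as [c' [? [? ?]]]; auto. exists c'. auto.
Qed.

Section PairSets.
Variable Sigma : list atom.

Lemma derivable_app L L' : derivable Sigma (atom_of L) -> derivable Sigma (atom_of (L ++ L')).
Proof. unfold atom_of. rewrite !map_app. apply D_E3; apply wf_atom_of. Qed.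

Lemma derivable_dedup L L' :
  derivable Sigma (atom_of (L ++ L' ++ L')) -> derivable Sigma (atom_of (L ++ L')).
Proof. unfold atom_of. rewrite !map_app. apply D_E4; apply wf_atom_of. Qed.

Lemma derivable_swap L L1 L2 :
  derivable Sigma (atom_of (L ++ L1 ++ L2)) -> derivable Sigma (atom_of (L ++ L2 ++ L1)).
Proof. unfold atom_of. rewrite !map_app. apply D_E5; apply wf_atom_of. Qed.

Lemma derivable_perm L L' : Permutation L L' -> forall pre,
  derivable Sigma (atom_of (pre ++ L)) -> derivable Sigma (atom_of (pre ++ L')).
Proof.
  induction 1 as [|p L L' _ IH|p q L|]; intros pre Hd; auto.
  - replace (pre ++ p :: L') with ((pre ++ [p]) ++ L') by now rewrite <- app_assoc.
    apply IH. now rewrite <- app_assoc.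
  - apply (derivable_swap pre [q] (p :: L)) in Hd.
    change ((p :: L) ++ [q]) with ([p] ++ L ++ [q]) in Hd.
    rewrite app_assoc in Hd. apply derivable_swap in Hd.
    now rewrite <- app_assoc in Hd.
Qed.

Lemma derivable_remove_dup p L :
  In p L -> derivable Sigma (atom_of (p :: L)) -> derivable Sigma (atom_of L).
Proof.
  intros Hp H. apply in_split in Hp as [L1 [L2 ->]].
  apply (derivable_perm _ ((L1 ++ L2) ++ [p] ++ [p])) with (pre := []) in H.
  - rewrite app_nil_l in H. apply derivable_dedup in H.
    apply (derivable_perm _ (L1 ++ p :: L2)) with (pre := []) in H; auto.
    rewrite <- app_assoc. apply Permutation_app_head. symmetry. apply Permutation_cons_append.
  - rewrite <- Permutation_middle, (Permutation_app_comm (L1 ++ L2)). reflexivity.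
Qed.

Lemma derivable_incl_list L L' :
  incl L L' -> derivable Sigma (atom_of L) -> derivable Sigma (atom_of L').
Proof.
  intros Hincl H. apply (derivable_app L L') in H. clear - Hincl H.
  induction L as [|p L IH]; auto.
  apply IH; [intros q Hq; apply Hincl; now right |].
  apply (derivable_remove_dup p); auto. apply in_or_app. right. apply Hincl. now left.
Qed.

Lemma derivable_incl a d : wf_atom a -> wf_atom d -> derivable Sigma a ->
  incl (atom_pairs a) (atom_pairs d) -> derivable Sigma d.
Proof.
  intros Ha Hd H Hincl. rewrite <- (atom_of_atom_pairs d) by auto.
  apply (derivable_incl_list (atom_pairs a)); auto. now rewrite atom_of_atom_pairs.
Qed.
Lemma derivable_E6_pairs off diag (c : nat * nat -> nat) :
  (forall p, In p diag -> fst p = snd p) -> derivable Sigma (atom_of (off ++ diag)) ->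
  derivable Sigma (atom_of (map (fun p => (c p, fst p)) off ++ map (fun p => (c p, snd p)) off)).
Proof.
  intros Hdiag H. unfold atom_of in *. rewrite !map_app, !map_map in *. simpl.
  replace (map snd diag) with (map fst diag) in H
    by (apply map_ext_in; intros p Hp; now rewrite Hdiag).
  apply D_E6 with (z := map c off) in H; rewrite ?length_map; auto.
Qed.
End PairSets.

(** * The closure of relations *)

Definition rel_incl (n R T : nat) : bool :=
  bforall2 n (fun i j => implb (rel_mem R i j) (rel_mem T i j)).
Definition rel_incl_conv (n R T : nat) : bool :=
  bforall2 n (fun i j => implb (rel_mem R i j) (rel_mem T j i)).
Definition rel_e6 (n R T : nat) : bool :=
  bforall2 n (fun i j => implb (rel_mem R i j && negb (i =? j))
                               (bex (S n) (fun z => rel_mem T z i && rel_mem T z j))).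
Definition rule_step (n R T : nat) : bool :=
  rel_incl n R T || rel_incl_conv n R T || rel_e6 n R T.
Definition code_in_rel (n C T : nat) : bool :=
  bforall2 n (fun i j => implb (code_has_pair C i j) (rel_mem T i j)).
Definition hyp_in_rel (n Sc T : nat) : bool :=
  bex Sc (fun m => code_has Sc m && code_in_rel n (code_at Sc m) T).

Inductive derived_rel (n Sc : nat) : nat -> Prop :=
| derived_hyp T : T < rel_count n -> hyp_in_rel n Sc T = true -> derived_rel n Sc T
| derived_step R T : derived_rel n Sc R -> T < rel_count n -> rule_step n R T = true ->
    derived_rel n Sc T.

Lemma derived_rel_lt n Sc T : derived_rel n Sc T -> T < rel_count n.
Proof. now destruct 1. Qed.

Definition rel_within (n T : nat) (d : atom) : Prop :=
  forall i j, i <= n -> j <= n -> rel_mem T i j = true -> In (i, j) (atom_pairs d).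

Section HypothesisCodes.
Variables (Sigma : list atom) (n : nat).
Hypothesis Sigma_wf : Forall wf_atom Sigma.

Lemma hyp_in_rel_iff T :
  hyp_in_rel n (code_list code_atom Sigma) T = true <->
  exists s, In s Sigma /\
    forall i j, i <= n -> j <= n -> In (i, j) (atom_pairs s) -> rel_mem T i j = true.
Proof.
  rewrite Forall_forall in Sigma_wf. unfold hyp_in_rel, code_in_rel. rewrite bex_iff. split.
  - intros [m [_ Hm]]. rewrite andb_true_iff, code_has_list, Nat.ltb_lt in Hm.
    destruct Hm as [Hm Hin].
    rewrite (code_at_list _ (([], []) : atom)), bforall2_iff in Hin by auto.
    exists (nth m Sigma (([], []) : atom)). split; [now apply nth_In|].
    intros i j Hi Hj Hij. specialize (Hin i j Hi Hj). rewrite implb_true_iff in Hin.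
    apply Hin, code_has_pair_iff; auto. apply Sigma_wf, nth_In; auto.
  - intros [s [Hs Hsub]]. apply (In_nth _ _ (([], []) : atom)) in Hs as [m [Hm <-]].
    exists m. split; [pose proof (length_le_code_list code_atom Sigma); lia|].
    rewrite andb_true_iff, code_has_list, (code_at_list _ (([], []) : atom)), bforall2_iff by auto.
    split; [now apply Nat.ltb_lt|]. intros i j Hi Hj. apply implb_true_iff.
    rewrite code_has_pair_iff by (apply Sigma_wf, nth_In; auto). auto.
Qed.
End HypothesisCodes.

Section Completeness.
Variables (Sigma : list atom) (n : nat).
Hypothesis Sigma_wf : Forall wf_atom Sigma.
Hypothesis Sigma_le : forall s, In s Sigma -> vars_le n s.
Let Sc := code_list code_atom Sigma.

Definition atom_rel (d : atom) : nat := rel_mask n (code_has_pair (code_atom d)).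

Lemma rel_mem_atom_rel d i j : wf_atom d -> i <= n -> j <= n ->
  rel_mem (atom_rel d) i j = true <-> In (i, j) (atom_pairs d).
Proof.
  intros Hd Hi Hj. unfold atom_rel. rewrite rel_mem_mask by auto.
  now apply code_has_pair_iff.
Qed.

Definition covered (d : atom) : Prop :=
  exists T, derived_rel n Sc T /\ rel_within n T (collapse n d).

Lemma covered_incl d d' : incl (atom_pairs d) (atom_pairs d') -> covered d -> covered d'.
Proof.
  intros Hincl [T [HT Hw]]. exists T. split; auto. intros i j Hi Hj Hij.
  apply Hw in Hij; auto. rewrite atom_pairs_collapse, in_map_iff in *.
  destruct Hij as [p [Hp Hin]]. eauto.
Qed.

Lemma covered_hyp a : In a Sigma -> covered a.
Proof.
  intros Ha. pose proof (proj1 (Forall_forall _ _) Sigma_wf a Ha) as Ha_wf.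
  exists (atom_rel a). rewrite collapse_id by auto. split.
  - apply derived_hyp; [apply rel_mask_lt|]. apply hyp_in_rel_iff; auto.
    exists a. split; auto. intros i j Hi Hj. now apply rel_mem_atom_rel; auto.
  - intros i j Hi Hj. now apply rel_mem_atom_rel; auto.
Qed.

Lemma covered_E1 x y z : covered (x, x) -> covered (y, z).
Proof.
  intros [T [HT Hw]]. exists 0. split.
  - apply (derived_step _ _ T _ HT); [apply Nat.neq_0_lt_0, Nat.pow_nonzero; discriminate|].
    unfold rule_step, rel_e6. rewrite !orb_true_iff, bforall2_iff. right.
    intros i j Hi Hj. apply implb_true_iff. rewrite andb_true_iff, negb_true_iff, Nat.eqb_neq.
    intros [Hij Hne]. apply Hw, In_combine_diag in Hij; tauto.
  - intros i j _ _. now rewrite rel_mem_0.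
Qed.

Lemma covered_E2 x y : covered (x, y) -> covered (y, x).
Proof.
  intros [T [HT Hw]]. exists (rel_mask n (fun i j => rel_mem T j i)). split.
  - apply (derived_step _ _ T _ HT); [apply rel_mask_lt|].
    unfold rule_step, rel_incl_conv. rewrite !orb_true_iff, bforall2_iff. left; right.
    intros i j Hi Hj. apply implb_true_iff. now rewrite rel_mem_mask.
  - intros i j Hi Hj. rewrite rel_mem_mask by auto. intros Hji.
    apply In_combine_swap, Hw; auto.
Qed.

Lemma covered_E6 x y z w : length x = length y -> length z = length x ->
  covered (x ++ w, y ++ w) -> covered (z ++ z, x ++ y).
Proof.
  intros Hxy Hzx [T [HT Hw]].
  set (d := collapse n (z ++ z, x ++ y)).
  assert (Hd : wf_atom d) by (apply wf_collapse; unfold wf_atom; simpl; rewrite !length_app; lia).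
  exists (atom_rel d). split.
  - apply (derived_step _ _ T _ HT); [apply rel_mask_lt|].
    unfold rule_step, rel_e6. rewrite !orb_true_iff, bforall2_iff. right.
    intros i j Hi Hj. apply implb_true_iff. rewrite andb_true_iff, negb_true_iff, Nat.eqb_neq.
    intros [Hij Hne]. apply Hw in Hij; auto. unfold collapse in Hij; simpl in Hij.
    rewrite !map_app, atom_pairs_app, in_app_iff in Hij by (rewrite !length_map; auto).
    destruct Hij as [Hij | Hij]; [| now apply In_combine_diag in Hij].
    destruct (In_combine_common (map (clamp n) x) (map (clamp n) y) (map (clamp n) z) i j)
      as [c [Hc [Hci Hcj]]]; [now rewrite !length_map | now rewrite !length_map | exact Hij |].
    apply bex_iff. exists c. split.
    + apply in_map_iff in Hc as [v [<- _]]. pose proof (clamp_le n v). lia.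
    + assert (c <= n) by (apply in_map_iff in Hc as [v [<- _]]; apply clamp_le).
      rewrite andb_true_iff, !rel_mem_atom_rel by auto. unfold d, collapse; simpl.
      rewrite !map_app, atom_pairs_app, !in_app_iff by (rewrite !length_map; auto). auto.
  - intros i j Hi Hj. now apply rel_mem_atom_rel.
Qed.

Lemma derivable_covered d : derivable Sigma d -> covered d.
Proof.
  induction 1 as [a Ha | x y z _ _ IH | x y _ _ IH | x y u v Hxy Huv _ IH
                 | x y u v Hxy Huv _ IH | x y z u v w Hxu Hyv Hzw _ IH | x y z w Hxy Hzx _ IH];
    unfold var, tuple in *.
  - now apply covered_hyp.
  - now apply covered_E1 with x.
  - now apply covered_E2.
  - apply covered_incl with (x, y); auto.
    rewrite atom_pairs_app by auto. apply incl_appl, incl_refl.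
  - apply covered_incl with (x ++ u ++ u, y ++ v ++ v); auto.
    rewrite !atom_pairs_app by assumption.
    intros p. rewrite !in_app_iff. tauto.
  - apply covered_incl with (x ++ y ++ z, u ++ v ++ w); auto.
    rewrite !atom_pairs_app by (rewrite ?length_app; auto).
    intros p. rewrite !in_app_iff. tauto.
  - now apply covered_E6 with w.
Qed.
End Completeness.

Definition rel_pairs (n R : nat) : list (nat * nat) :=
  filter (fun p => rel_mem R (fst p) (snd p)) (list_prod (seq 0 (S n)) (seq 0 (S n))).

Lemma In_rel_pairs n R i j :
  In (i, j) (rel_pairs n R) <-> i <= n /\ j <= n /\ rel_mem R i j = true.
Proof. unfold rel_pairs. rewrite filter_In, in_prod_iff, !in_seq. simpl. intuition lia. Qed.

Definition common_pred (n T : nat) (p : nat * nat) : nat :=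
  match find (fun c => rel_mem T c (fst p) && rel_mem T c (snd p)) (seq 0 (S n)) with
  | Some c => c
  | None => 0
  end.

Lemma common_pred_spec n T p :
  bex (S n) (fun c => rel_mem T c (fst p) && rel_mem T c (snd p)) = true ->
  common_pred n T p <= n /\ rel_mem T (common_pred n T p) (fst p) = true /\
  rel_mem T (common_pred n T p) (snd p) = true.
Proof.
  rewrite bex_iff. intros [c [Hc Hp]]. unfold common_pred.
  destruct (find _ _) eqn:E.
  - apply find_some in E as [E1 E2]. apply in_seq in E1.
    apply andb_true_iff in E2 as [E2 E3]. repeat split; auto; lia.
  - eapply find_none in E; [rewrite Hp in E; discriminate | apply in_seq; lia].
Qed.

Section Soundness.
Variables (Sigma : list atom) (n : nat).
Hypothesis Sigma_wf : Forall wf_atom Sigma.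
Hypothesis Sigma_le : forall s, In s Sigma -> vars_le n s.
Let Sc := code_list code_atom Sigma.

Lemma derivable_of_hyp T d :
  hyp_in_rel n Sc T = true -> wf_atom d -> rel_within n T d -> derivable Sigma d.
Proof.
  intros HT Hd Hw. apply hyp_in_rel_iff in HT as [s [Hs Hsub]]; auto.
  apply (derivable_incl _ s); auto;
    [now apply (proj1 (Forall_forall _ _) Sigma_wf) | now constructor |].
  intros [i j] Hij. destruct (vars_le_atom_pairs n s i j) as [Hi Hj]; auto.
Qed.

Lemma derivable_of_rel_e6 R T d :
  (forall d', wf_atom d' -> rel_within n R d' -> derivable Sigma d') ->
  rel_e6 n R T = true -> wf_atom d -> rel_within n T d -> derivable Sigma d.
Proof.
  intros HR He6 Hd Hw. unfold rel_e6 in He6. rewrite bforall2_iff in He6.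
  set (off := filter (fun p => negb (fst p =? snd p)) (rel_pairs n R)).
  set (diag := filter (fun p => fst p =? snd p) (rel_pairs n R)).
  assert (Hoff : forall p, In p off ->
    fst p <= n /\ snd p <= n /\ common_pred n T p <= n /\
    rel_mem T (common_pred n T p) (fst p) = true /\ rel_mem T (common_pred n T p) (snd p) = true).
  { intros [i j] Hp. unfold off in Hp.
    rewrite filter_In, In_rel_pairs, negb_true_iff, Nat.eqb_neq in Hp. cbn [fst snd] in *.
    destruct Hp as [[Hi [Hj Hij]] Hne]. specialize (He6 i j Hi Hj).
    rewrite Hij, (proj2 (Nat.eqb_neq i j) Hne) in He6. cbn [andb negb implb] in He6.
    apply (common_pred_spec n T (i, j)) in He6. tauto. }
  assert (Hpairs : derivable Sigma (atom_of (off ++ diag))).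
  { apply HR; [apply wf_atom_of|]. intros i j Hi Hj Hij.
    rewrite atom_pairs_atom_of, in_app_iff. unfold off, diag. rewrite !filter_In, In_rel_pairs.
    simpl. destruct (i =? j); auto. }
  apply derivable_E6_pairs with (c := common_pred n T) in Hpairs.
  - apply (derivable_incl _ _ _ (wf_atom_of _) Hd Hpairs).
    intros p. rewrite atom_pairs_atom_of, in_app_iff, !in_map_iff.
    intros [[q [<- Hq]] | [q [<- Hq]]]; apply Hoff in Hq; apply Hw; tauto.
  - intros p Hp. unfold diag in Hp. rewrite filter_In, Nat.eqb_eq in Hp. tauto.
Qed.

Lemma derived_rel_derivable T : derived_rel n Sc T ->
  forall d, wf_atom d -> rel_within n T d -> derivable Sigma d.
Proof.
  induction 1 as [T _ HT | R T _ IH _ Hstep]; intros d Hd Hw.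
  - now apply (derivable_of_hyp T).
  - unfold rule_step in Hstep. rewrite !orb_true_iff in Hstep.
    destruct Hstep as [[Hincl | Hconv] | He6].
    + apply IH; auto. unfold rel_incl in Hincl. rewrite bforall2_iff in Hincl.
      intros i j Hi Hj Hij. apply Hw; auto.
      now apply (proj1 (implb_true_iff _ _) (Hincl i j Hi Hj)).
    + destruct d as [x y]. unfold wf_atom in Hd; simpl in Hd.
      apply D_E2; auto. apply IH; [unfold wf_atom; simpl; auto|].
      unfold rel_incl_conv in Hconv. rewrite bforall2_iff in Hconv.
      intros i j Hi Hj Hij. apply In_combine_swap, Hw; auto.
      now apply (proj1 (implb_true_iff _ _) (Hconv i j Hi Hj)).
    + now apply (derivable_of_rel_e6 R T).
Qed.
End Soundness.

(** * Computing the closure *)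

Definition next_mem (n Sc F T : nat) : bool :=
  Nat.testbit F T || hyp_in_rel n Sc T
  || bex (rel_count n) (fun R => Nat.testbit F R && rule_step n R T).
Definition closure_step (n Sc F : nat) : nat := msum (rel_count n) (next_mem n Sc F).
(* [rel_count n + 1] steps suffice: each step either adds a relation or is a fixed point. *)
Definition closure_mask (n Sc : nat) : nat := Nat.iter (S (rel_count n)) (closure_step n Sc) 0.

Section Iteration.
Variables n Sc : nat.
Let N := rel_count n.
Definition closure_iter (k : nat) : nat := Nat.iter k (closure_step n Sc) 0.

Lemma testbit_closure_step F T : T < N -> Nat.testbit (closure_step n Sc F) T = next_mem n Sc F T.
Proof. apply testbit_msum. Qed.

Lemma closure_step_ext F F' : (forall T, T < N -> Nat.testbit F T = Nat.testbit F' T) ->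
  closure_step n Sc F = closure_step n Sc F'.
Proof.
  intros H. apply bsum_ext. intros T HT. do 2 f_equal. unfold next_mem.
  rewrite H by auto. f_equal. apply bex_ext. intros R HR. now rewrite H.
Qed.

Lemma closure_iter_derived k T :
  T < N -> Nat.testbit (closure_iter k) T = true -> derived_rel n Sc T.
Proof.
  revert T; induction k as [|k IH]; intros T HT Hk; [now rewrite Nat.bits_0 in Hk|].
  unfold closure_iter in Hk. rewrite Nat.iter_succ, testbit_closure_step in Hk by auto.
  unfold next_mem in Hk. rewrite !orb_true_iff, bex_iff in Hk.
  destruct Hk as [[Hk | Hhyp] | [R [HR HRT]]].
  - now apply IH.
  - now apply derived_hyp.
  - apply andb_true_iff in HRT as [HR' Hstep]. apply (derived_step _ _ R); auto.
Qed.

Lemma closure_iter_mono k T : T < N -> Nat.testbit (closure_iter k) T = true ->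
  Nat.testbit (closure_iter (S k)) T = true.
Proof.
  intros HT Hk. unfold closure_iter. rewrite Nat.iter_succ, testbit_closure_step by auto.
  unfold next_mem. fold (closure_iter k). now rewrite Hk.
Qed.

Definition bit_count (F : nat) : nat := bsum N (fun T => Nat.b2n (Nat.testbit F T)).

Lemma bit_count_le F : bit_count F <= N.
Proof.
  unfold bit_count. generalize N as K. intros K.
  induction K; cbn [bsum]; auto. destruct (Nat.testbit F K); simpl; lia.
Qed.

Definition same_bits (F F' : nat) : bool :=
  ball N (fun T => Bool.eqb (Nat.testbit F T) (Nat.testbit F' T)).

Lemma same_bits_iff F F' :
  same_bits F F' = true <-> forall T, T < N -> Nat.testbit F T = Nat.testbit F' T.
Proof. unfold same_bits. rewrite ball_iff. now setoid_rewrite eqb_true_iff. Qed.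

Lemma closure_iter_stable_or_count K :
  (exists k, k < K /\ same_bits (closure_iter (S k)) (closure_iter k) = true)
  \/ K <= bit_count (closure_iter K).
Proof.
  induction K as [|K [[k [Hk Hs]] | Hc]]; [now right; lia | left; exists k; split; auto; lia|].
  destruct (same_bits (closure_iter (S K)) (closure_iter K)) eqn:Hs; [left; exists K; auto|].
  right. enough (bit_count (closure_iter K) < bit_count (closure_iter (S K))) by lia.
  apply ball_false in Hs as [T [HT HT']].
  apply bsum_lt_strict.
  - intros U HU. destruct (Nat.testbit (closure_iter K) U) eqn:E; cbn [Nat.b2n]; [|lia].
    now rewrite closure_iter_mono.
  - exists T. split; auto.
    destruct (Nat.testbit (closure_iter K) T) eqn:E; [now rewrite closure_iter_mono in HT'|].
    destruct (Nat.testbit (closure_iter (S K)) T); cbn [Nat.b2n] in *; [lia | discriminate].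
Qed.

Lemma closure_mask_fixed : closure_step n Sc (closure_mask n Sc) = closure_mask n Sc.
Proof.
  destruct (closure_iter_stable_or_count (S N)) as [[k [Hk Hs]] | Hc];
    [| pose proof (bit_count_le (closure_iter (S N))); lia].
  rewrite same_bits_iff in Hs.
  assert (Hstable : forall j, closure_iter (S k + j) = closure_iter (S k)).
  { induction j as [|j IH]; [now rewrite Nat.add_0_r|].
    rewrite Nat.add_succ_r. unfold closure_iter at 1. rewrite Nat.iter_succ.
    fold (closure_iter (S k + j)).
    rewrite IH. now apply closure_step_ext. }
  change (closure_mask n Sc) with (closure_iter (S N)).
  change (closure_step n Sc (closure_iter (S N))) with (closure_iter (S (S N))).
  replace (S (S N)) with (S k + S (N - k)) by lia.
  replace (S N) with (S k + (N - k)) by lia.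
  now rewrite !Hstable.
Qed.

Lemma closure_mask_derived T :
  T < N -> Nat.testbit (closure_mask n Sc) T = true -> derived_rel n Sc T.
Proof. apply closure_iter_derived. Qed.

Lemma derived_closure_mask T : derived_rel n Sc T -> Nat.testbit (closure_mask n Sc) T = true.
Proof.
  induction 1 as [T HT Hhyp | R T HR IH HT Hstep];
    rewrite <- closure_mask_fixed, testbit_closure_step by auto; unfold next_mem.
  - now rewrite Hhyp, orb_true_r.
  - apply orb_true_iff. right. apply bex_iff. exists R.
    rewrite IH, Hstep. split; auto. now apply derived_rel_lt in HR.
Qed.
End Iteration.

Definition rel_in_code (n T C : nat) : bool :=
  bforall2 n (fun i j => implb (rel_mem T i j) (code_has_pair C i j)).

(* The code [c] of an instance bounds all its variables, so it serves as [n]. *)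
Definition decide_code (c : nat) : bool :=
  bex (rel_count c) (fun T => Nat.testbit (closure_mask c (unpair_l c)) T
                              && rel_in_code c T (unpair_r c)).

Lemma rel_in_code_iff n T d : wf_atom d ->
  rel_in_code n T (code_atom d) = true <-> rel_within n T d.
Proof.
  intros Hd. unfold rel_in_code, rel_within. rewrite bforall2_iff.
  setoid_rewrite implb_true_iff. now setoid_rewrite code_has_pair_iff.
Qed.

Theorem derivable_iff_decide_code Sigma a : Forall wf_atom Sigma -> wf_atom a ->
  derivable Sigma a <-> decide_code (code_instance Sigma a) = true.
Proof.
  intros HSigma Ha. unfold decide_code, code_instance.
  rewrite unpair_l_pair, unpair_r_pair, bex_iff.
  set (Sc := code_list code_atom Sigma).
  set (n := pair Sc (code_atom a)).
  pose proof (pair_ge Sc (code_atom a)) as Hn.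
  assert (Hbound : forall s, In s Sigma -> vars_le n s).
  { intros s Hs. apply (vars_le_mono (code_atom s)); [|apply vars_le_code_atom].
    pose proof (In_le_code_list code_atom Sigma s Hs). lia. }
  assert (Ha_le : vars_le n a) by (apply (vars_le_mono (code_atom a)), vars_le_code_atom; lia).
  split.
  - intros Hd. destruct (derivable_covered Sigma n HSigma Hbound a Hd) as [T [HT Hw]].
    rewrite collapse_id in Hw by auto. exists T.
    rewrite andb_true_iff, rel_in_code_iff by auto.
    split; [now apply derived_rel_lt in HT | split; auto].
    now apply derived_closure_mask.
  - intros [T [HT HTa]]. rewrite andb_true_iff, rel_in_code_iff in HTa by auto.
    destruct HTa as [Hmask Hw].
    apply (derived_rel_derivable Sigma n HSigma Hbound T); auto.
    now apply closure_mask_derived.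
Qed.

(** * The decision procedure as a mu-recursive function *)

Definition EMem T i j := EBit T (EPair i j).
Lemma denote_EMem env T i j X I J : denote env T = X -> denote env i = I -> denote env j = J ->
  denote env (EMem T i j) = Nat.b2n (rel_mem X I J).
Proof. intros. unfold EMem, rel_mem. denote_solve. Qed.
#[export] Hint Extern 1 (denote _ (EMem _ _ _) = _) => apply denote_EMem : denote.

Definition ECodeDrop k c := EIter k c (EUnpairR (EPred (EVar 0))).
Lemma denote_ECodeDrop env k c K C : denote env k = K -> denote env c = C ->
  denote env (ECodeDrop k c) = code_drop K C.
Proof. intros. unfold ECodeDrop, code_drop, code_tl. denote_solve. Qed.
#[export] Hint Extern 1 (denote _ (ECodeDrop _ _) = _) => apply denote_ECodeDrop : denote.

Definition ECodeAt c k := EUnpairL (EPred (ECodeDrop k c)).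
Lemma denote_ECodeAt env c k C K : denote env c = C -> denote env k = K ->
  denote env (ECodeAt c k) = code_at C K.
Proof. intros. unfold ECodeAt, code_at. denote_solve. Qed.
#[export] Hint Extern 1 (denote _ (ECodeAt _ _) = _) => apply denote_ECodeAt : denote.

Definition ECodeHas c k := ENot (EEq (ECodeDrop k c) EZero).
Lemma denote_ECodeHas env c k C K : denote env c = C -> denote env k = K ->
  denote env (ECodeHas c k) = Nat.b2n (code_has C K).
Proof. intros. unfold ECodeHas, code_has. denote_solve. Qed.
#[export] Hint Extern 1 (denote _ (ECodeHas _ _) = _) => apply denote_ECodeHas : denote.

Definition ECodeHasPair C i j :=
  EEx C (EAnd (EAnd (ECodeHas (EUnpairL (shift 1 C)) (EVar 0))
                    (EEq (ECodeAt (EUnpairL (shift 1 C)) (EVar 0)) (shift 1 i)))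
              (EEq (ECodeAt (EUnpairR (shift 1 C)) (EVar 0)) (shift 1 j))).
Lemma denote_ECodeHasPair env C i j X I J :
  denote env C = X -> denote env i = I -> denote env j = J ->
  denote env (ECodeHasPair C i j) = Nat.b2n (code_has_pair X I J).
Proof. intros. unfold ECodeHasPair, code_has_pair. denote_solve. Qed.
#[export] Hint Extern 1 (denote _ (ECodeHasPair _ _ _) = _) => apply denote_ECodeHasPair : denote.

Definition EForall2 n body := EAll (ESucc n) (EAll (ESucc (shift 1 n)) body).
Lemma denote_EForall2 env n body N P : denote env n = N ->
  (forall i j, denote (j :: i :: env) body = Nat.b2n (P i j)) ->
  denote env (EForall2 n body) = Nat.b2n (bforall2 N P).
Proof. intros. unfold EForall2, bforall2. denote_solve. Qed.
#[export] Hint Extern 1 (denote _ (EForall2 _ _) = _) => apply denote_EForall2 : denote.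

Definition EMsum K body := ESum K (EMul (EPow2 (EVar 0)) body).
Lemma denote_EMsum env K body N c : denote env K = N ->
  (forall t, denote (t :: env) body = Nat.b2n (c t)) ->
  denote env (EMsum K body) = msum N c.
Proof. intros. unfold EMsum, msum. denote_solve. Qed.
#[export] Hint Extern 1 (denote _ (EMsum _ _) = _) => apply denote_EMsum : denote.

Definition ERelCount n := EPow2 (ESucc (EPair n n)).
Lemma denote_ERelCount env n N : denote env n = N -> denote env (ERelCount n) = rel_count N.
Proof. intros. unfold ERelCount, rel_count, rel_size. denote_solve. Qed.
#[export] Hint Extern 1 (denote _ (ERelCount _) = _) => apply denote_ERelCount : denote.

Definition ERelIncl n R T :=
  EForall2 n (EImp (EMem (shift 2 R) (EVar 1) (EVar 0)) (EMem (shift 2 T) (EVar 1) (EVar 0))).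
Definition ERelInclConv n R T :=
  EForall2 n (EImp (EMem (shift 2 R) (EVar 1) (EVar 0)) (EMem (shift 2 T) (EVar 0) (EVar 1))).
Definition ERelE6 n R T :=
  EForall2 n
    (EImp (EAnd (EMem (shift 2 R) (EVar 1) (EVar 0)) (ENot (EEq (EVar 1) (EVar 0))))
          (EEx (ESucc (shift 2 n))
               (EAnd (EMem (shift 3 T) (EVar 0) (EVar 2)) (EMem (shift 3 T) (EVar 0) (EVar 1))))).
Definition ERuleStep n R T := EOr (EOr (ERelIncl n R T) (ERelInclConv n R T)) (ERelE6 n R T).

Lemma denote_ERuleStep env n R T N X Y :
  denote env n = N -> denote env R = X -> denote env T = Y ->
  denote env (ERuleStep n R T) = Nat.b2n (rule_step N X Y).
Proof.
  intros. unfold ERuleStep, ERelIncl, ERelInclConv, ERelE6, rule_step, rel_incl, rel_incl_conv,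
    rel_e6.
  denote_solve.
Qed.
#[export] Hint Extern 1 (denote _ (ERuleStep _ _ _) = _) => apply denote_ERuleStep : denote.

Definition EHypInRel n Sc T :=
  EEx Sc (EAnd (ECodeHas (shift 1 Sc) (EVar 0))
               (EForall2 (shift 1 n)
                  (EImp (ECodeHasPair (ECodeAt (shift 3 Sc) (EVar 2)) (EVar 1) (EVar 0))
                        (EMem (shift 3 T) (EVar 1) (EVar 0))))).
Lemma denote_EHypInRel env n Sc T N S0 Y :
  denote env n = N -> denote env Sc = S0 -> denote env T = Y ->
  denote env (EHypInRel n Sc T) = Nat.b2n (hyp_in_rel N S0 Y).
Proof. intros. unfold EHypInRel, hyp_in_rel, code_in_rel. denote_solve. Qed.
#[export] Hint Extern 1 (denote _ (EHypInRel _ _ _) = _) => apply denote_EHypInRel : denote.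

Definition EClosureStep n Sc F :=
  EMsum (ERelCount n)
    (EOr (EOr (EBit (shift 1 F) (EVar 0)) (EHypInRel (shift 1 n) (shift 1 Sc) (EVar 0)))
         (EEx (ERelCount (shift 1 n)) (EAnd (EBit (shift 2 F) (EVar 0))
                                         (ERuleStep (shift 2 n) (EVar 0) (EVar 1))))).
Lemma denote_EClosureStep env n Sc F N S0 X :
  denote env n = N -> denote env Sc = S0 -> denote env F = X ->
  denote env (EClosureStep n Sc F) = closure_step N S0 X.
Proof. intros. unfold EClosureStep, closure_step, next_mem. denote_solve. Qed.
#[export] Hint Extern 1 (denote _ (EClosureStep _ _ _) = _) => apply denote_EClosureStep : denote.

Definition EDecide :=
  EEx (ERelCount (EVar 0))
    (EAnd (EBit (EIter (ESucc (ERelCount (EVar 1))) EZero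
                       (EClosureStep (EVar 2) (EUnpairL (EVar 2)) (EVar 0))) (EVar 0))
          (EForall2 (EVar 1) (EImp (EMem (EVar 2) (EVar 1) (EVar 0))
                                   (ECodeHasPair (EUnpairR (EVar 3)) (EVar 1) (EVar 0))))).
Lemma denote_EDecide c : denote [c] EDecide = Nat.b2n (decide_code c).
Proof. unfold EDecide, decide_code, closure_mask, rel_in_code. denote_solve. Qed.

Lemma exp_decides (e : exp) (P : nat -> bool) :
  (forall c, denote [c] e = Nat.b2n (P c)) ->
  exists f : mu, (forall c, exists r, eval f [c] r) /\ (forall c, eval f [c] 1 <-> P c = true).
Proof.
  intros He. exists (compile 1 e). split.
  - intros c. exists (denote [c] e). apply (eval_compile e [c]).
  - intros c. split.
    + intros H. apply (eval_compile_inv e [c]) in H. rewrite He in H.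
      now destruct (P c).
    + intros H. pose proof (eval_compile e [c]) as Hc. now rewrite He, H in Hc.
Qed.

Theorem theorem2 : decidable_problem derivable.
Proof.
  destruct (exp_decides EDecide decide_code denote_EDecide) as [f [Htotal Hcorrect]].
  exists f. split; auto. intros Sigma a HSigma Ha.
  rewrite Hcorrect. now apply derivable_iff_decide_code.
Qed.
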